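(* For $i=1,2$ let $\mathbf{L}_i=(L_i,\le)$ be a nontrivial finite join-semilattice with greatest element $1$ satisfying property $( * )$, and let $(R_i,\vee,\circ)$ be a subsemiring of $(\mathrm{JM}_1(\mathbf{L}_i),\vee,\circ)$ such that $f_{a,b}\in R_i$ for all $a\in L_i\setminus\{1\}$, $b\in L_i$, and every $f\in R_i$ satisfies $f_{a,b}\le f$ for some $a\in L_i\setminus\{1\}$, $b\in L_i$. If $(R_1,\vee,\circ)$ and $(R_2,\vee,\circ)$ are isomorphic semirings, then $\mathbf{L}_1$ and $\mathbf{L}_2$ are isomorphic.
   Context: $\mathrm{JM}_1(\mathbf{L})$ is the set of maps $f:L\to L$ preserving binary joins with $f(1)=1$, a semiring under pointwise join and composition, ordered pointwise. $f_{a,b}(x)=b$ if $x\le a$ and $1$ otherwise. A finite semilattice with greatest element $1$ satisfies $( * )$ if there exists $u$ with $1\ne u\vee x$ for all $x\ne 1$. *)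

From HB Require Import structures.
From mathcomp Require Import all_boot all_order.
Set Implicit Arguments. Unset Strict Implicit. Unset Printing Implicit Defensive.
Import Order.TTheory.
Local Open Scope order_scope.

Section JM.
Variables (d : Order.disp_t) (L : finTJoinSemilatticeType d).

Definition fjoin (f g : {ffun L -> L}) : {ffun L -> L} := [ffun x => f x `|` g x].
Definition fcomp (f g : {ffun L -> L}) : {ffun L -> L} := [ffun x => f (g x)].
Definition fle (f g : {ffun L -> L}) : bool := [forall x, f x <= g x].

Definition JM1 (f : {ffun L -> L}) : Prop :=
  (forall x y, f (x `|` y) = f x `|` f y) /\ f \top = \top.

Definition fab (a b : L) : {ffun L -> L} := [ffun x => if x <= a then b else \top].

Definition star_prop : Prop :=
  exists u : L, forall x : L, x != \top -> u `|` x != \top.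

Definition subsemiring (R : {set {ffun L -> L}}) : Prop :=
  (forall f, f \in R -> JM1 f) /\
  (forall f g, f \in R -> g \in R -> fjoin f g \in R) /\
  (forall f g, f \in R -> g \in R -> fcomp f g \in R).

Definition good_R (R : {set {ffun L -> L}}) : Prop :=
  subsemiring R /\
  (forall a b : L, a != \top -> fab a b \in R) /\
  (forall f, f \in R -> exists a b : L, a != \top /\ fle (fab a b) f).

End JM.

Definition semiring_iso (d1 d2 : Order.disp_t)
  (L1 : finTJoinSemilatticeType d1) (L2 : finTJoinSemilatticeType d2)
  (R1 : {set {ffun L1 -> L1}}) (R2 : {set {ffun L2 -> L2}}) : Prop :=
  exists phi : {ffun L1 -> L1} -> {ffun L2 -> L2},
    [/\ {in R1 &, injective phi}, phi @: R1 = R2,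
        {in R1 &, forall f g, phi (fjoin f g) = fjoin (phi f) (phi g)} &
        {in R1 &, forall f g, phi (fcomp f g) = fcomp (phi f) (phi g)}].

Definition jsl_iso (d1 d2 : Order.disp_t)
  (L1 : finTJoinSemilatticeType d1) (L2 : finTJoinSemilatticeType d2) : Prop :=
  exists h : L1 -> L2, bijective h /\ forall x y, h (x `|` y) = h x `|` h y.

From HB Require Import structures.
From mathcomp Require Import all_boot all_order.
Set Implicit Arguments. Unset Strict Implicit. Unset Printing Implicit Defensive.
Import Order.TTheory.
Local Open Scope order_scope.

(* Fix a <> 1. Since every f in R_1 fixes 1, composing with the idempotent
   e := f_{a,a} gives f o e = f_{a, f a}, so {f_{a,c} | c in L_1} = R_1 o e is
   a join-semilattice copy of L_1 inside R_1. Transporting along the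
   isomorphism phi and evaluating at a point x0 with phi(e)(x0) <> 1 gives a
   join-morphism c |-> phi(f_{a,c})(x0) from L_1 onto L_2: any y is reached
   because f_{phi(e)(x0), y} lies in R_2 = phi(R_1). By symmetry there is also
   a surjection L_2 -> L_1, so both lattices have the same size and the first
   surjection is bijective. *)

Lemma card_image_surj (T T' : finType) (f : T -> T') :
  (forall y, exists x, f x = y) -> (#|T'| <= #|[seq f x | x in T]|)%N.
Proof.
move=> f_surj; apply/subset_leq_card/subsetP=> y _.
by have [x <-] := f_surj y; apply: image_f.
Qed.

Lemma bij_of_surj_surj (T T' : finType) (f : T -> T') (g : T' -> T) :
  (forall y, exists x, f x = y) -> (forall x, exists y, g y = x) -> bijective f.
Proof.
move=> f_surj g_surj.
have le_T'T := leq_trans (card_image_surj f_surj) (leq_image_card f T).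
have le_TT' := leq_trans (card_image_surj g_surj) (leq_image_card g T').
apply: inj_card_bij le_T'T; apply: in2T; apply/image_injP.
rewrite eqn_leq leq_image_card /=.
exact: leq_trans le_TT' (card_image_surj f_surj).
Qed.

Section Fab.
Variables (d : Order.disp_t) (L : finTJoinSemilatticeType d).

Lemma exists_neq_top : (1 < #|L|)%N -> exists a : L, a != \top.
Proof.
move=> /card_gt1P [x [y [_ _ nxy]]].
have [ex|] := eqVneq x \top; last by exists x.
by exists y; rewrite -ex eq_sym.
Qed.

Lemma fabE_le (a b x : L) : x <= a -> fab a b x = b.
Proof. by move=> le_xa; rewrite ffunE le_xa. Qed.

Lemma fcomp_fab (k : {ffun L -> L}) (a : L) :
  k \top = \top -> fcomp k (fab a a) = fab a (k a).
Proof. by move=> k_top; apply/ffunP=> x; rewrite !ffunE; case: (x <= a). Qed.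

Lemma fab_join (a c c' : L) : fab a (c `|` c') = fjoin (fab a c) (fab a c').
Proof. by apply/ffunP=> x; rewrite !ffunE; case: (x <= a); rewrite ?joinxx. Qed.

Lemma good_R_top (R : {set {ffun L -> L}}) f :
  good_R R -> f \in R -> f \top = \top.
Proof. by move=> [[JM _] _] /JM []. Qed.

End Fab.

Lemma semiring_iso_sym d1 d2 (L1 : finTJoinSemilatticeType d1)
  (L2 : finTJoinSemilatticeType d2)
  (R1 : {set {ffun L1 -> L1}}) (R2 : {set {ffun L2 -> L2}}) :
  subsemiring R1 -> semiring_iso R1 R2 -> semiring_iso R2 R1.
Proof.
move=> [_ [R1_join R1_comp]] [phi [phi_inj phi_im phi_join phi_comp]].
pose psi (f : {ffun L2 -> L2}) :=
  odflt [ffun x : L1 => x] [pick k in R1 | phi k == f].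
have psiP f : f \in R2 -> psi f \in R1 /\ phi (psi f) = f.
  rewrite -phi_im => /imsetP [k kR ->]; rewrite /psi.
  case: pickP => [k' /andP [k'R /eqP ->] //|].
  by move=> /(_ k); rewrite kR eqxx.
have phi_in_R2 k : k \in R1 -> phi k \in R2.
  by rewrite -phi_im; apply: imset_f.
have psiK k : k \in R1 -> psi (phi k) = k.
  by move=> kR; have [pR /phi_inj] := psiP (phi k) (phi_in_R2 k kR); apply.
exists psi; split.
- move=> f g /psiP [_ ef] /psiP [_ eg] psi_eq.
  by rewrite -ef -eg psi_eq.
- apply/setP=> k; apply/imsetP/idP => [[f /psiP [fR _] ->] //|kR].
  by exists (phi k); [exact: phi_in_R2 | rewrite psiK].
- move=> f g /psiP [fR <-] /psiP [gR <-].
  by rewrite -phi_join // !psiK // R1_join.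
- move=> f g /psiP [fR <-] /psiP [gR <-].
  by rewrite -phi_comp // !psiK // R1_comp.
Qed.

Section Transport.
Variables (d1 d2 : Order.disp_t).
Variables (L1 : finTJoinSemilatticeType d1) (L2 : finTJoinSemilatticeType d2).
Variables (R1 : {set {ffun L1 -> L1}}) (R2 : {set {ffun L2 -> L2}}).
Hypotheses (R1_good : good_R R1) (R2_good : good_R R2).
Variable phi : {ffun L1 -> L1} -> {ffun L2 -> L2}.
Hypotheses (phi_inj : {in R1 &, injective phi}) (phi_im : phi @: R1 = R2).
Hypothesis phi_join :
  {in R1 &, forall f g, phi (fjoin f g) = fjoin (phi f) (phi g)}.
Hypothesis phi_comp :
  {in R1 &, forall f g, phi (fcomp f g) = fcomp (phi f) (phi g)}.

Variables (a : L1) (a_neq_top : a != \top).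

Let fab_in_R1 c : fab a c \in R1.
Proof. by have [_ [->]] := R1_good. Qed.

Let phi_in_R2 k : k \in R1 -> phi k \in R2.
Proof. by rewrite -phi_im; apply: imset_f. Qed.

(* If phi e were constantly 1, then phi e = phi f_{a,1} o phi e
   = phi (f_{a,1} o e) = phi f_{a,1}, forcing a = e a = f_{a,1} a = 1. *)
Lemma phi_fab_neq_top : exists x0, phi (fab a a) x0 != \top.
Proof.
apply/existsP; apply: contraT => /existsPn all_top.
have e_top x : phi (fab a a) x = \top by apply/eqP; rewrite -[_ == _]negbK.
suff /phi_inj/ffunP/(_ a) : phi (fab a \top) = phi (fab a a).
  rewrite !fabE_le // => /(_ (fab_in_R1 _) (fab_in_R1 _)) /eqP.
  by rewrite eq_sym (negbTE a_neq_top).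
have top_fixed := good_R_top R2_good (phi_in_R2 (fab_in_R1 \top)).
rewrite -(fabE_le \top (lexx a)) -fcomp_fab ?(good_R_top R1_good) // phi_comp //.
by apply/ffunP=> x; rewrite ffunE e_top.
Qed.

Variables (x0 : L2) (x0_not_top : phi (fab a a) x0 != \top).

Lemma phi_fab_surj y : exists c, phi (fab a c) x0 = y.
Proof.
have : fab (phi (fab a a) x0) y \in R2 by have [_ [->]] := R2_good.
rewrite -phi_im => /imsetP [k kR phi_k]; exists (k a).
rewrite -fcomp_fab ?(good_R_top R1_good) // phi_comp // -phi_k ffunE.
exact: fabE_le.
Qed.

Lemma phi_fab_join c c' :
  phi (fab a (c `|` c')) x0 = phi (fab a c) x0 `|` phi (fab a c') x0.
Proof. by rewrite fab_join phi_join // ffunE. Qed.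

End Transport.

Lemma semiring_iso_jsl_surj d1 d2 (L1 : finTJoinSemilatticeType d1)
  (L2 : finTJoinSemilatticeType d2)
  (R1 : {set {ffun L1 -> L1}}) (R2 : {set {ffun L2 -> L2}}) :
  (1 < #|L1|)%N -> good_R R1 -> good_R R2 -> semiring_iso R1 R2 ->
  exists h : L1 -> L2, (forall y, exists x, h x = y) /\
    forall x y, h (x `|` y) = h x `|` h y.
Proof.
move=> L1_nontriv R1_good R2_good [phi [phi_inj phi_im phi_join phi_comp]].
have [a a_neq_top] := exists_neq_top L1_nontriv.
have [x0 x0_not_top] :=
  phi_fab_neq_top R1_good R2_good phi_inj phi_im phi_comp a_neq_top.
exists (fun c => phi (fab a c) x0); split.
- exact: (phi_fab_surj R1_good R2_good phi_im phi_comp a_neq_top x0_not_top).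
- exact: (phi_fab_join R1_good phi_join a_neq_top).
Qed.

Theorem proposition6p6 (d1 d2 : Order.disp_t)
  (L1 : finTJoinSemilatticeType d1) (L2 : finTJoinSemilatticeType d2)
  (R1 : {set {ffun L1 -> L1}}) (R2 : {set {ffun L2 -> L2}}) :
  (1 < #|L1|)%N -> (1 < #|L2|)%N ->
  star_prop L1 -> star_prop L2 ->
  good_R R1 -> good_R R2 ->
  semiring_iso R1 R2 ->
  jsl_iso L1 L2.
Proof.
move=> L1_nontriv L2_nontriv _ _ R1_good R2_good iso12.
have iso21 := semiring_iso_sym R1_good.1 iso12.
have [h [h_surj h_join]] :=
  semiring_iso_jsl_surj L1_nontriv R1_good R2_good iso12.
have [h' [h'_surj _]] :=
  semiring_iso_jsl_surj L2_nontriv R2_good R1_good iso21.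
by exists h; split; [exact: bij_of_surj_surj h_surj h'_surj|].
Qed.
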